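(* Let $\mathcal G$ be an undirected graph on nodes $\{1,\dots,n\}$ with adjacency matrix $A=(a_{ij})\in\{0,1\}^{n\times n}$, and consider the networked SIR process on $\mathcal G$ with infection rates $\beta_i>0$ and recovery rates $\delta_i>0$, $i=1,\dots,n$. Define the $n\times n$ diagonal matrices $J$, $B$, $D$ by $J_{ii}=S_i(0)$, $B_{ii}=\beta_i$, $D_{ii}=\delta_i$. Let $\bar\lambda>0$ be given. If there exists an entrywise positive vector $v\in\mathbb R^n$ such that $$v^\top JBA+\mathbf 1_n^\top D< v^\top D \quad\text{(entrywise)}\qquad\text{and}\qquad v^\top I(0)<\bar\lambda+\sigma_I(0),$$ then $\lambda<\bar\lambda$.
   Context: Networked SIR process: each node $i$ is at each time $t\ge0$ in exactly one of the states susceptible, infected, removed, encoded by $\{0,1\}$-valued variables $S_i(t),I_i(t),R_i(t)$ (exactly one equals $1$). It is a continuous-time Markov process with transition probabilities, for all $t\ge 0$, $h>0$: $\Pr(I_i(t+h)=1\mid S_i(t)=1)=\beta_i\sum_{j=1}^n a_{ij}I_j(t)\,h+o(h)$ and $\Pr(R_i(t+h)=1\mid I_i(t)=1)=\delta_i h+o(h)$; no other transitions occur (removed nodes stay removed). At time $0$ each node is (deterministically, known) either susceptible or infected. $I(t)=[I_1(t),\dots,I_n(t)]^\top$. $\sigma_I(t)$ and $\sigma_R(t)$ denote the numbers of infected and removed nodes at time $t$, and $\lambda=\lim_{t\to\infty}E[\sigma_R(t)]-\sigma_I(0)$ (the expected number of infections after time $0$). $\mathbf 1_n$ is the all-ones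 vector in $\mathbb R^n$; inequalities between vectors are entrywise. *)

From HB Require Import structures.
From mathcomp Require Import all_boot all_order all_algebra.
From mathcomp Require Import all_classical all_reals all_analysis.
Set Implicit Arguments. Unset Strict Implicit. Unset Printing Implicit Defensive.
Import Order.TTheory GRing.Theory Num.Theory.
Import numFieldNormedType.Exports.
Local Open Scope classical_set_scope.
Local Open Scope ring_scope.

Definition stS : 'I_3 := @Ordinal 3 0 isT.
Definition stI : 'I_3 := @Ordinal 3 1 isT.
Definition stR : 'I_3 := @Ordinal 3 2 isT.

Definition config (n : nat) := {ffun 'I_n -> 'I_3}.

Definition upd n (x : config n) (i : 'I_n) (s : 'I_3) : config n :=
  [ffun k => if k == i then s else x k].

(* Transition rate of the SIR Markov chain from x to y (0 when y = x). *)
Definition sir_rate (R : realType) n (A : 'M[R]_n) (beta delta : 'I_n -> R)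
  (x y : config n) : R :=
  \sum_(i < n)
     ((if (x i == stS) && (y == upd x i stI)
       then beta i * \sum_(j < n) A i j * (if x j == stI then 1 else 0) else 0)
    + (if (x i == stI) && (y == upd x i stR) then delta i else 0)).

(* p t x = Pr(state at time t is x); Kolmogorov forward equation on t > 0,
   right-continuity at 0 and the deterministic initial condition x0. *)
Definition sir_law (R : realType) n (A : 'M[R]_n) (beta delta : 'I_n -> R)
  (x0 : config n) (p : R -> config n -> R) : Prop :=
  (forall y, p 0 y = if y == x0 then 1 else 0) /\
  (forall y, p t y @[t --> 0^'+] --> p 0 y) /\
  (forall t : R, 0 < t -> forall y,
     is_derive t 1 (fun s => p s y)
       (\sum_(x : config n) p t x * sir_rate A beta delta x y
        - p t y * \sum_(z : config n) sir_rate A beta delta y z)).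

Definition sigmaI n (x : config n) : nat := #|[set i | x i == stI]|.
Definition sigmaR n (x : config n) : nat := #|[set i | x i == stR]|.

Definition expect (R : realType) n (p : R -> config n -> R) (t : R)
  (f : config n -> R) : R := \sum_(x : config n) p t x * f x.

Definition Ivec (R : realType) n (x : config n) : 'cV[R]_n :=
  \col_i (if x i == stI then 1 else 0).
Definition Svec (R : realType) n (x : config n) : 'rV[R]_n :=
  \row_i (if x i == stS then 1 else 0).

From HB Require Import structures.
From mathcomp Require Import all_boot all_order all_algebra.
From mathcomp Require Import all_classical all_reals all_analysis.
From mathcomp Require Import ring lra.
Import Order.TTheory GRing.Theory Num.Theory.
Import numFieldNormedType.Exports.
Local Open Scope classical_set_scope.
Local Open Scope ring_scope.

(* The chain only moves nodes forward (S to I to R), so every transition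
   increases the total stage [sir_potential]; induction on it shows that the
   solution of the forward equation stays nonnegative.  For an observable f the
   mean E f(X t) has derivative E (Q f)(X t), Q the generator.  The number of
   removed nodes satisfies Q sigma_R >= 0, so its mean is nondecreasing, while
   W = sigma_R + v^T I satisfies Q W <= 0 under the threshold condition: an
   infection of i adds beta_i v_i times its infection pressure, a recovery adds
   delta_i (1 - v_i), and summing the former over infecting neighbours gives
   v^T J B A.  Hence E sigma_R(t) <= E W(t) <= W(0) = v^T I(0), and the bounded
   nondecreasing mean converges to a limit obeying the same bound. *)

Lemma is_derive_big_sum (R : numFieldType) (I : Type) (r : seq I) (h : I -> R -> R)
    (dh : I -> R) (x : R) :
  (forall i, is_derive x 1 (h i) (dh i)) ->
  is_derive x 1 (fun t => \sum_(i <- r) h i t) (\sum_(i <- r) dh i).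
Proof.
move=> hd; have -> : (fun t => \sum_(i <- r) h i t) = \sum_(i <- r) h i.
  by apply/funext => t; rewrite fct_sumE.
by elim/big_rec2: _ => [|i f df _ IH]; [exact: is_derive_cst | exact: is_deriveD].
Qed.

Lemma cvg_big_sum (R : numFieldType) (I : Type) (r : seq I) (h : I -> R -> R)
    (l : I -> R) (F : set_system R) {FF : Filter F} :
  (forall i, h i t @[t --> F] --> l i) ->
  \sum_(i <- r) h i t @[t --> F] --> \sum_(i <- r) l i.
Proof.
move=> hl; have -> : (fun t => \sum_(i <- r) h i t) = \sum_(i <- r) h i.
  by apply/funext => t; rewrite fct_sumE.
by elim/big_rec2: _ => [|i f df _ IH]; [exact: cvg_cst | exact: cvgD].
Qed.

Section MonotoneOnHalfLine.
Context {R : realType} {g : R -> R} (dg : R -> R).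
Hypothesis g_derive : forall t : R, 0 < t -> is_derive t 1 g (dg t).
Hypothesis g_right_cont : g t @[t --> 0^'+] --> g 0.

Lemma is_derive_ge0_ndecr : (forall t : R, 0 < t -> 0 <= dg t) ->
  forall s t : R, 0 <= s -> s <= t -> g s <= g t.
Proof.
move=> dg_ge0 s t s_ge0 st; apply: (@ger0_derive1_ndecry R g 0) => //.
- by move=> x; rewrite in_itv /= andbT => /(g_derive x) [].
- move=> x; rewrite in_itv /= andbT => x_gt0.
  by have gx := g_derive x x_gt0; rewrite derive1E derive_val dg_ge0.
- apply/continuous_within_itvcyP; split => // x; rewrite in_itv /= andbT.
  by move=> /(g_derive x) [? _]; exact/differentiable_continuous/derivable1_diffP.
Qed.

End MonotoneOnHalfLine.

Lemma is_derive_le0_nincr {R : realType} {g : R -> R} (dg : R -> R) :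
  (forall t : R, 0 < t -> is_derive t 1 g (dg t)) -> g t @[t --> 0^'+] --> g 0 ->
  (forall t : R, 0 < t -> dg t <= 0) ->
  forall s t : R, 0 <= s -> s <= t -> g t <= g s.
Proof.
move=> g_derive g_right_cont dg_le0 s t s_ge0 st; rewrite -lerN2.
apply: (@is_derive_ge0_ndecr R (- g) (- dg)) => //.
- by move=> x /(g_derive x); exact: is_deriveN.
- exact: cvgN.
- by move=> x /(dg_le0 x); rewrite /= oppr_ge0.
Qed.

Lemma ndecr_bounded_cvg_pinfty {R : realType} {g : R -> R} (M : R) :
  (forall s t : R, 0 <= s -> s <= t -> g s <= g t) -> (forall t : R, 0 <= t -> g t <= M) ->
  exists2 l, g t @[t --> +oo] --> l & l <= M.
Proof.
move=> g_ndecr g_le_M; pose g0 t := g (Num.max t 0).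
have max_ge0 (t : R) : 0 <= Num.max t 0 by rewrite le_max lexx orbT.
have g0_ndecr : nondecreasing_fun g0.
  by move=> s t st; apply: g_ndecr (max_ge0 s) _; rewrite le_max2.
have g0_ub : has_ubound (range g0) by exists M => _ [t _ <-]; exact/g_le_M/max_ge0.
exists (sup (range g0)).
  apply: cvg_trans (nondecreasing_cvgr g0_ndecr g0_ub); apply: near_eq_cvg.
  by near=> t; rewrite /g0 max_l //; near: t; exact: nbhs_pinfty_ge.
by apply: ge_sup => [|_ [t _ <-]]; [exists (g0 0), 0 | exact/g_le_M/max_ge0].
Unshelve. all: end_near.
Qed.

Lemma is_derive_expR_scale {R : realType} (c s : R) :
  is_derive s 1 (fun u => expR (c * u)) (expR (c * s) * c).
Proof.
have lin : is_derive s 1 (c \*: id) (c *: 1) := is_deriveZ c (is_derive_id s 1).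
rewrite /GRing.scale /= mulr1 in lin.
exact: (@is_derive1_comp _ expR (c \*: id)).
Qed.

Definition generator {R : realType} {T : finType} (q : T -> T -> R)
    (f : T -> R) (x : T) : R :=
  \sum_y q x y * (f y - f x).

Section ForwardEquation.
Context {R : realType} {T : finType} {q : T -> T -> R} {p : R -> T -> R}.
Hypothesis p_right_cont : forall y, p t y @[t --> 0^'+] --> p 0 y.
Hypothesis p_forward : forall t : R, 0 < t -> forall y,
  is_derive t 1 (p^~ y) (\sum_x p t x * q x y - p t y * \sum_z q y z).

Lemma mean_right_cont (f : T -> R) :
  \sum_x p t x * f x @[t --> 0^'+] --> \sum_x p 0 x * f x.
Proof.
apply: (@cvg_big_sum _ _ _ (fun x t => p t x * f x)) => x.
exact: cvgM (p_right_cont x) (cvg_cst _).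
Qed.

Lemma is_derive_mean (f : T -> R) (t : R) : 0 < t ->
  is_derive t 1 (fun s => \sum_x p s x * f x) (\sum_x p t x * generator q f x).
Proof.
move=> t_gt0; apply: is_derive_eq.
  apply: (@is_derive_big_sum _ _ _ (fun y s => p s y * f y)
    (fun y => (\sum_x p t x * q x y - p t y * \sum_z q y z) * f y)) => y.
  have -> : (fun s => p s y * f y) = p^~ y * cst (f y) by [].
  apply: is_derive_eq (is_deriveM (@p_forward t t_gt0 y) (is_derive_cst _ _ _)) _.
  by rewrite scaler0 add0r /GRing.scale /= mulrC.
have -> : \sum_x p t x * generator q f x
    = \sum_x \sum_y p t x * q x y * f y - \sum_x p t x * f x * \sum_y q x y.
  rewrite -sumrB; apply: eq_bigr => x _.
  by rewrite mulr_sumr mulr_sumr -sumrB; apply: eq_bigr => y _; ring.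
under eq_bigr do rewrite mulrBl.
rewrite sumrB exchange_big /=; congr (_ - _).
  by apply: eq_bigr => y _; rewrite mulr_suml.
by apply: eq_bigr => x _; ring.
Qed.

Lemma mean_ndecr (f : T -> R) :
  (forall t : R, 0 <= t -> forall x, 0 <= p t x) ->
  (forall x, 0 <= generator q f x) ->
  forall s t : R, 0 <= s -> s <= t -> \sum_x p s x * f x <= \sum_x p t x * f x.
Proof.
move=> p_ge0 gen_ge0.
apply: (is_derive_ge0_ndecr (fun t => \sum_x p t x * generator q f x)).
- by move=> t; exact: is_derive_mean.
- exact: mean_right_cont.
- by move=> t t_gt0; apply: sumr_ge0 => x _; rewrite mulr_ge0 // p_ge0 // ltW.
Qed.

Lemma mean_nincr (f : T -> R) :
  (forall t : R, 0 <= t -> forall x, 0 <= p t x) ->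
  (forall x, generator q f x <= 0) ->
  forall s t : R, 0 <= s -> s <= t -> \sum_x p t x * f x <= \sum_x p s x * f x.
Proof.
move=> p_ge0 gen_le0.
apply: (is_derive_le0_nincr (fun t => \sum_x p t x * generator q f x)).
- by move=> t; exact: is_derive_mean.
- exact: mean_right_cont.
- by move=> t t_gt0; apply: sumr_le0 => x _; rewrite mulr_ge0_le0 // p_ge0 // ltW.
Qed.

(* States feeding [y] have a smaller potential, so by induction on the potential
   the inflow into [y] is nonnegative and [expR (c * t) * p t y] is
   nondecreasing, [c] being the total exit rate of [y]. *)
Lemma forward_ge0 (phi : T -> nat) :
  (forall x y, 0 <= q x y) -> (forall x y, q x y != 0 -> (phi x < phi y)%N) ->
  (forall y, 0 <= p 0 y) -> forall t : R, 0 <= t -> forall y, 0 <= p t y.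
Proof.
move=> q_ge0 q_phi p0_ge0 t t_ge0 y; move: t t_ge0.
elim: {y}(phi y).+1 {-2}y (ltnSn (phi y)) => // k IH y phi_y t t_ge0.
set c := \sum_z q y z; pose inflow s := \sum_x p s x * q x y.
have inflow_ge0 (s : R) : 0 < s -> 0 <= inflow s.
  move=> s_gt0; apply: sumr_ge0 => x _.
  have [->|qxy] := eqVneq (q x y) 0; first by rewrite mulr0.
  by rewrite mulr_ge0 // IH ?ltW // (leq_trans (q_phi _ _ qxy)).
have : expR (c * 0) * p 0 y <= expR (c * t) * p t y.
  apply: (@is_derive_ge0_ndecr _ (fun s => expR (c * s) * p s y)
    (fun s => expR (c * s) * inflow s)) => //.
  - move=> s s_gt0.
    have -> : (fun s => expR (c * s) * p s y) = (fun u => expR (c * u)) * p^~ y by [].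
    apply: is_derive_eq (is_deriveM (is_derive_expR_scale c s) (@p_forward s s_gt0 y)) _.
    by rewrite /GRing.scale /= /inflow -/c; ring.
  - apply: cvgM (p_right_cont y); apply: cvg_at_right_filter.
    have [d _] := is_derive_expR_scale c 0.
    exact: differentiable_continuous ((derivable1_diffP _ _).1 d).
  - by move=> s s_gt0; rewrite mulr_ge0 ?expR_ge0 // inflow_ge0.
by rewrite mulr0 expR0 mul1r => /(le_trans (p0_ge0 y)); rewrite pmulr_rge0 ?expR_gt0.
Qed.

End ForwardEquation.

Lemma sum_upd {V : zmodType} {n} (w : 'I_n -> 'I_3 -> V) (x : config n) i s :
  \sum_k w k (upd x i s k) = \sum_k w k (x k) - w i (x i) + w i s.
Proof.
rewrite (bigD1 i) //= [X in _ = X - _ + _](bigD1 i) //= ffunE eqxx.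
rewrite (eq_bigr (fun k => w k (x k))) => [|k /negPf ki]; last by rewrite ffunE ki.
by rewrite addrC [w i (x i) + _]addrC addrK.
Qed.

Lemma sum_if_eq_mul {R : pzSemiRingType} {T : finType} (b : bool) (a : R) (z : T) (F : T -> R) :
  \sum_y (if b && (y == z) then a else 0) * F y = (if b then a else 0) * F z.
Proof.
rewrite (bigD1 z) //= eqxx andbT big1 ?addr0 // => y /negPf yz.
by rewrite yz andbF mul0r.
Qed.

Definition sir_potential {n} (x : config n) : nat := (\sum_k nat_of_ord (x k))%N.

Lemma sir_potential_upd {n} (x : config n) i (s : 'I_3) :
  (x i < s)%N -> (sir_potential x < sir_potential (upd x i s))%N.
Proof.
move=> xi_lt_s; rewrite /sir_potential (bigD1 i) //= [X in (_ < X)%N](bigD1 i) //=.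
rewrite ffunE eqxx [X in (_ < _ + X)%N](eq_bigr (fun k => nat_of_ord (x k))).
  by rewrite ltn_add2r.
by move=> k /negPf ki; rewrite ffunE ki.
Qed.

Definition infection_pressure {R : realType} {n} (A : 'M[R]_n) (x : config n) i : R :=
  \sum_j A i j * (if x j == stI then 1 else 0).

Lemma sum_infection_pressure {R : realType} {n} (A : 'M[R]_n) (x : config n) (c : 'I_n -> R) :
  \sum_i c i * infection_pressure A x i
  = \sum_j (\sum_i c i * A i j) * (if x j == stI then 1 else 0).
Proof.
under eq_bigr do rewrite mulr_sumr.
rewrite exchange_big /=; apply: eq_bigr => j _.
by rewrite mulr_suml; apply: eq_bigr => i _; rewrite mulrA.
Qed.

Definition removed_weight {R : realType} {n} (k : 'I_n) (s : 'I_3) : R :=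
  if s == stR then 1 else 0.

(* [sigma_R + v^T I], extended by [v k] at susceptible nodes that were not
   susceptible at time 0.  Such configurations are unreachable, and the extension
   makes the drift inequality [generator_lyapunov_le0] hold everywhere. *)
Definition lyapunov_weight {R : realType} {n} (x0 : config n) (v : 'cV[R]_n)
    (k : 'I_n) (s : 'I_3) : R :=
  if s == stR then 1 else if s == stI then v k 0
  else if x0 k == stS then 0 else v k 0.

Lemma sigmaR_sum (R : realType) n (x : config n) :
  (sigmaR x)%:R = \sum_k removed_weight k (x k) :> R.
Proof.
rewrite /sigmaR -sum1_card natr_sum big_mkcond /=; apply: eq_bigr => k _.
by rewrite /in_mem /= /in_set /= asboolb /removed_weight.
Qed.

Lemma sigmaR_le_lyapunov {R : realType} {n} (x0 x : config n) (v : 'cV[R]_n) :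
  (forall i, 0 <= v i 0) -> (sigmaR x)%:R <= \sum_k lyapunov_weight x0 v k (x k).
Proof.
move=> v_ge0; rewrite sigmaR_sum; apply: ler_sum => k _.
rewrite /removed_weight /lyapunov_weight.
by case: ifP => // _; do 2?case: ifP.
Qed.

Lemma state_cases (s : 'I_3) : [|| s == stS, s == stI | s == stR].
Proof. by case: s => [[|[|[|m]]] ?]. Qed.

Lemma lyapunov_init {R : realType} {n} (x0 : config n) (v : 'cV[R]_n) :
  (forall i, x0 i != stR) ->
  \sum_k lyapunov_weight x0 v k (x0 k) = (v^T *m Ivec R x0) 0 0.
Proof.
move=> x0_notR; rewrite !mxE; apply: eq_bigr => k _.
rewrite !mxE /lyapunov_weight (negPf (x0_notR k)).
have [_|x0_notI] := ifP; first by rewrite mulr1.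
have := state_cases (x0 k); rewrite x0_notI (negPf (x0_notR k)) !orbF => ->.
by rewrite mulr0.
Qed.

Lemma threshold_mxE {R : realType} {n} (A : 'M[R]_n) (beta delta : 'I_n -> R)
    (x0 : config n) (v : 'cV[R]_n) j :
  ((v^T *m diag_mx (Svec R x0) *m diag_mx (\row_i beta i) *m A)
     + (const_mx 1 *m diag_mx (\row_i delta i))) 0 j
  = \sum_i (if x0 i == stS then beta i * v i 0 else 0) * A i j + delta j.
Proof.
rewrite !mul_mx_diag !mxE mul1r; congr (_ + _); apply: eq_bigr => i _.
by rewrite !mxE; case: ifP => _; rewrite ?mulr1 ?mulr0 ?mul0r // [v i 0 * _]mulrC.
Qed.

Section SIR.
Context {R : realType} {n : nat} {A : 'M[R]_n} {beta delta : 'I_n -> R}.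
Local Notation rate := (sir_rate A beta delta).

Lemma sir_rate_potential (x y : config n) :
  rate x y != 0 -> (sir_potential x < sir_potential y)%N.
Proof.
apply: contraNT => pot_y; rewrite /sir_rate big1 // => i _.
have upd_pot (s : 'I_3) : (x i < s)%N -> y != upd x i s.
  by move=> /(sir_potential_upd x i); apply: contraTneq => <-.
by rewrite !ifN ?addr0 //; apply/negP => /andP[/eqP xi];
  apply/negP/upd_pot; rewrite xi.
Qed.

Lemma generator_sir_additive (w : 'I_n -> 'I_3 -> R) (x : config n) :
  generator rate (fun y => \sum_k w k (y k)) x =
  \sum_i ((if x i == stS then beta i * infection_pressure A x i else 0)
            * (w i stI - w i (x i))
        + (if x i == stI then delta i else 0) * (w i stR - w i (x i))).
Proof.
rewrite /generator /sir_rate; under eq_bigr do rewrite mulr_suml.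
rewrite exchange_big /=; apply: eq_bigr => i _.
under eq_bigr do rewrite mulrDl.
by rewrite big_split /= !sum_if_eq_mul !sum_upd; congr (_ * _ + _ * _); ring.
Qed.

Hypotheses (A_ge0 : forall i j, 0 <= A i j) (beta_ge0 : forall i, 0 <= beta i)
  (delta_ge0 : forall i, 0 <= delta i).

Lemma infection_pressure_ge0 (x : config n) i : 0 <= infection_pressure A x i.
Proof. by apply: sumr_ge0 => j _; rewrite mulr_ge0 //; case: ifP. Qed.

Lemma sir_rate_ge0 (x y : config n) : 0 <= rate x y.
Proof.
apply: sumr_ge0 => i _; rewrite addr_ge0 //; case: ifP => // _.
by rewrite mulr_ge0 // infection_pressure_ge0.
Qed.

Lemma generator_sigmaR_ge0 (x : config n) :
  0 <= generator rate (fun y => (sigmaR y)%:R) x.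
Proof.
have -> : (fun y : config n => (sigmaR y)%:R : R) = fun y => \sum_k removed_weight k (y k).
  by apply/funext => y; rewrite sigmaR_sum.
rewrite generator_sir_additive; apply: sumr_ge0 => i _; rewrite /removed_weight /=.
have [->|_] := eqVneq (x i) stS; first by rewrite subrr mulr0 mul0r addr0.
rewrite mul0r add0r; case: ifP => [/eqP -> /=|_]; last by rewrite mul0r.
by rewrite subr0 mulr1.
Qed.

Lemma generator_lyapunov_le0 (x0 : config n) (v : 'cV[R]_n) :
  (forall i, 0 <= v i 0) ->
  (forall j, \sum_i (if x0 i == stS then beta i * v i 0 else 0) * A i j + delta j
             <= v j 0 * delta j) ->
  forall x, generator rate (fun y => \sum_k lyapunov_weight x0 v k (y k)) x <= 0.
Proof.
move=> v_ge0 threshold x; rewrite generator_sir_additive.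
pose c i := if x0 i == stS then beta i * v i 0 else 0.
have c_ge0 i : 0 <= c i by rewrite /c; case: ifP => // _; rewrite mulr_ge0.
apply: (@le_trans _ _ (\sum_i (c i * infection_pressure A x i
    + (if x i == stI then delta i * (1 - v i 0) else 0)))).
  apply: ler_sum => i _; rewrite /lyapunov_weight /=.
  have [->|_] := eqVneq (x i) stS.
    by rewrite /c; case: ifP => _ /=; rewrite mul0r !addr0 ?subrr ?mulr0 //; nra.
  have pressure_ge0 := mulr_ge0 (c_ge0 i) (infection_pressure_ge0 x i).
  rewrite mul0r add0r; case: ifP => [/eqP -> /=|_]; last by rewrite mul0r addr0.
  by rewrite lerDr.
rewrite big_split /= sum_infection_pressure -big_split /=.
apply: sumr_le0 => j _; case: ifP => _; last by rewrite mulr0 addr0.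
by have := threshold j; rewrite /c; lra.
Qed.

End SIR.

Theorem proposition1 (R : realType) (n : nat) (A : 'M[R]_n)
  (beta delta : 'I_n -> R) (x0 : config n) (p : R -> config n -> R)
  (lambdabar : R) (v : 'cV[R]_n) :
  (forall i j, A i j = 0 \/ A i j = 1) ->
  (forall i j, A i j = A j i) ->
  (forall i, 0 < beta i) -> (forall i, 0 < delta i) ->
  (forall i, x0 i != stR) ->
  sir_law A beta delta x0 p ->
  0 < lambdabar ->
  (forall i, 0 < v i 0) ->
  (forall k, ((v^T *m diag_mx (Svec R x0) *m diag_mx (\row_i beta i) *m A)
              + (const_mx 1 *m diag_mx (\row_i delta i))) 0 k
             < (v^T *m diag_mx (\row_i delta i)) 0 k) ->
  (v^T *m Ivec R x0) 0 0 < lambdabar + (sigmaI x0)%:R ->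
  exists l : R,
    (expect p t (fun x => (sigmaR x)%:R)) @[t --> +oo] --> l /\
    l - (sigmaI x0)%:R < lambdabar.
Proof.
move=> A01 _ beta_gt0 delta_gt0 x0_notR [p0 [p_right_cont p_forward]] _ v_gt0.
move=> threshold I0_lt.
have A_ge0 i j : 0 <= A i j by case: (A01 i j) => ->.
have beta_ge0 i : 0 <= beta i := ltW (beta_gt0 i).
have delta_ge0 i : 0 <= delta i := ltW (delta_gt0 i).
have v_ge0 i : 0 <= v i 0 := ltW (v_gt0 i).
have p0_ge0 y : 0 <= p 0 y by rewrite p0; case: ifP.
have p_ge0 := forward_ge0 p_right_cont p_forward sir_potential
  (sir_rate_ge0 A_ge0 beta_ge0 delta_ge0) sir_rate_potential p0_ge0.
have threshold_le j :
    \sum_i (if x0 i == stS then beta i * v i 0 else 0) * A i j + delta j <= v j 0 * delta j.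
  by have := threshold j; rewrite threshold_mxE mul_mx_diag !mxE => /ltW.
set W := fun y : config n => \sum_k lyapunov_weight x0 v k (y k).
have W_nincr := mean_nincr p_right_cont p_forward W p_ge0
  (generator_lyapunov_le0 A_ge0 beta_ge0 x0 v v_ge0 threshold_le).
have sigmaR_ndecr := mean_ndecr p_right_cont p_forward _ p_ge0
  (generator_sigmaR_ge0 delta_ge0).
have W_init : expect p 0 W = (v^T *m Ivec R x0) 0 0.
  rewrite -lyapunov_init // -[RHS]mul1r /expect.
  under eq_bigr do rewrite p0.
  exact: (sum_if_eq_mul true).
have sigmaR_le t : 0 <= t ->
    expect p t (fun x => (sigmaR x)%:R) <= (v^T *m Ivec R x0) 0 0.
  move=> t_ge0; rewrite -W_init; apply: le_trans (W_nincr 0 t (lexx 0) t_ge0).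
  by apply: ler_sum => x _; rewrite ler_wpM2l ?p_ge0 ?sigmaR_le_lyapunov.
have [l l_cvg l_le] := ndecr_bounded_cvg_pinfty _ sigmaR_ndecr sigmaR_le.
by exists l; split; last lra.
Qed.
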